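(* Let $V$ be a real vector space of dimension $2n$ endowed with a linear map $J:V\to V$ with $J^2=-\mathrm{Id}$, and let $T_1,T_2$ be two $(0,6)$-tensors on $V$ such that, for $i=1,2$ and all $x_1,\dots,x_6\in V$: (a) $T_i(x_1,x_2,x_3,x_4,x_5,x_6)=-T_i(x_2,x_1,x_3,x_4,x_5,x_6)=-T_i(x_1,x_2,x_4,x_3,x_5,x_6)=T_i(x_3,x_4,x_1,x_2,x_5,x_6)$; (b) $T_i(x_1,x_2,x_3,x_4,x_5,x_6)+T_i(x_1,x_3,x_4,x_2,x_5,x_6)+T_i(x_1,x_4,x_2,x_3,x_5,x_6)=0$; (c) $T_i(x_1,x_2,x_3,x_4,x_5,x_6)=T_i(Jx_1,Jx_2,x_3,x_4,x_5,x_6)=T_i(x_1,x_2,Jx_3,Jx_4,x_5,x_6)$; (d) $T_i(x_1,x_2,x_3,x_4,x_5,x_6)=-T_i(x_1,x_2,x_3,x_4,x_6,x_5)=T_i(x_1,x_2,x_3,x_4,Jx_5,Jx_6)$. If $T_1(u,Ju,Ju,u,v,Jv)=T_2(u,Ju,Ju,u,v,Jv)$ for all $u,v\in V$, then $T_1=T_2$. *)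

From HB Require Import structures.
From mathcomp Require Import all_boot all_order all_algebra.
From mathcomp Require Import reals.
Set Implicit Arguments. Unset Strict Implicit. Unset Printing Implicit Defensive.
Import Order.TTheory GRing.Theory Num.Theory.
Local Open Scope ring_scope.

Definition tensor6 (R : realType) (V : vectType R) := V -> V -> V -> V -> V -> V -> R.

Definition multilinear6 (R : realType) (V : vectType R) (T : tensor6 V) : Prop :=
  forall (a : R) (x y x1 x2 x3 x4 x5 x6 : V),
    T (a *: x + y) x2 x3 x4 x5 x6 = a * T x x2 x3 x4 x5 x6 + T y x2 x3 x4 x5 x6 /\
    T x1 (a *: x + y) x3 x4 x5 x6 = a * T x1 x x3 x4 x5 x6 + T x1 y x3 x4 x5 x6 /\
    T x1 x2 (a *: x + y) x4 x5 x6 = a * T x1 x2 x x4 x5 x6 + T x1 x2 y x4 x5 x6 /\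
    T x1 x2 x3 (a *: x + y) x5 x6 = a * T x1 x2 x3 x x5 x6 + T x1 x2 x3 y x5 x6 /\
    T x1 x2 x3 x4 (a *: x + y) x6 = a * T x1 x2 x3 x4 x x6 + T x1 x2 x3 x4 y x6 /\
    T x1 x2 x3 x4 x5 (a *: x + y) = a * T x1 x2 x3 x4 x5 x + T x1 x2 x3 x4 x5 y.

Definition sym_conditions (R : realType) (V : vectType R) (J : V -> V) (T : tensor6 V) : Prop :=
  forall x1 x2 x3 x4 x5 x6 : V,
    T x1 x2 x3 x4 x5 x6 = - T x2 x1 x3 x4 x5 x6 /\
    T x1 x2 x3 x4 x5 x6 = - T x1 x2 x4 x3 x5 x6 /\
    T x1 x2 x3 x4 x5 x6 = T x3 x4 x1 x2 x5 x6 /\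
    T x1 x2 x3 x4 x5 x6 + T x1 x3 x4 x2 x5 x6 + T x1 x4 x2 x3 x5 x6 = 0 /\
    T x1 x2 x3 x4 x5 x6 = T (J x1) (J x2) x3 x4 x5 x6 /\
    T x1 x2 x3 x4 x5 x6 = T x1 x2 (J x3) (J x4) x5 x6 /\
    T x1 x2 x3 x4 x5 x6 = - T x1 x2 x3 x4 x6 x5 /\
    T x1 x2 x3 x4 x5 x6 = T x1 x2 x3 x4 (J x5) (J x6).

(** Put T := T1 - T2; it satisfies (a)-(d) and T(u, Ju, Ju, u, v, Jv) = 0.
  Polarizing in the last pair (using (d)) gives T(u, Ju, Ju, u, p, q) = 0 for
  all p, q, so for fixed (p, q) the first four slots form a J-invariant
  algebraic curvature tensor with vanishing holomorphic sectional curvature.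
  The classical argument then applies: polarizing u into x +- y and using
  J-invariance and the Bianchi identity kills the sectional curvatures
  T(x, y, x, y, p, q), hence T(x, y, x, z, p, q), hence T is antisymmetric in
  slots 1 and 3, and together with (a) and (b) this forces T = 0. *)
From HB Require Import structures.
From mathcomp Require Import all_boot all_order all_algebra.
From mathcomp Require Import reals.
From mathcomp Require Import lra.
Set Implicit Arguments. Unset Strict Implicit. Unset Printing Implicit Defensive.
Import Order.TTheory GRing.Theory Num.Theory.
Local Open Scope ring_scope.

Section ScalarLinear.

Variables (R : realType) (V : vectType R).

Definition scalar_linear (f : V -> R) :=
  forall (a : R) (x y : V), f (a *: x + y) = a * f x + f y.

Variables (f : V -> R) (f_lin : scalar_linear f).

Lemma scalar_linearD x y : f (x + y) = f x + f y.
Proof. by have := f_lin 1 x y; rewrite scale1r mul1r. Qed.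

Lemma scalar_linearN x : f (- x) = - f x.
Proof.
have f0 : f 0 = 0 by have := scalar_linearD 0 0; rewrite addr0; lra.
by have := f_lin (-1) x 0; rewrite scaleN1r addr0 f0 addr0 mulN1r.
Qed.

End ScalarLinear.

Section KahlerTensor6.

Variables (R : realType) (V : vectType R) (J : {linear V -> V}).
Hypothesis JK : forall x : V, J (J x) = - x.
Variable T : tensor6 V.
Hypotheses (T_lin : multilinear6 T) (T_sym : sym_conditions J T).

Lemma T_lin1 b c d p q : scalar_linear (fun x => T x b c d p q).
Proof. by move=> a x y; case: (T_lin a x y x b c d p q). Qed.
Lemma T_lin2 a c d p q : scalar_linear (fun x => T a x c d p q).
Proof. by move=> s x y; case: (T_lin s x y a a c d p q) => _ []. Qed.
Lemma T_lin3 a b d p q : scalar_linear (fun x => T a b x d p q).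
Proof. by move=> s x y; case: (T_lin s x y a b a d p q) => _ [_ []]. Qed.
Lemma T_lin4 a b c p q : scalar_linear (fun x => T a b c x p q).
Proof. by move=> s x y; case: (T_lin s x y a b c a p q) => _ [_ [_ []]]. Qed.
Lemma T_lin5 a b c d q : scalar_linear (fun x => T a b c d x q).
Proof. by move=> s x y; case: (T_lin s x y a b c d a q) => _ [_ [_ [_ []]]]. Qed.
Lemma T_lin6 a b c d p : scalar_linear (fun x => T a b c d p x).
Proof. by move=> s x y; case: (T_lin s x y a b c d p a) => _ [_ [_ [_ []]]]. Qed.

Lemma T_D1 x y b c d p q : T (x + y) b c d p q = T x b c d p q + T y b c d p q.
Proof. exact: scalar_linearD (T_lin1 b c d p q) x y. Qed.
Lemma T_D2 a x y c d p q : T a (x + y) c d p q = T a x c d p q + T a y c d p q.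
Proof. exact: scalar_linearD (T_lin2 a c d p q) x y. Qed.
Lemma T_D3 a b x y d p q : T a b (x + y) d p q = T a b x d p q + T a b y d p q.
Proof. exact: scalar_linearD (T_lin3 a b d p q) x y. Qed.
Lemma T_D4 a b c x y p q : T a b c (x + y) p q = T a b c x p q + T a b c y p q.
Proof. exact: scalar_linearD (T_lin4 a b c p q) x y. Qed.
Lemma T_D5 a b c d x y q : T a b c d (x + y) q = T a b c d x q + T a b c d y q.
Proof. exact: scalar_linearD (T_lin5 a b c d q) x y. Qed.
Lemma T_D6 a b c d p x y : T a b c d p (x + y) = T a b c d p x + T a b c d p y.
Proof. exact: scalar_linearD (T_lin6 a b c d p) x y. Qed.

Lemma T_N1 x b c d p q : T (- x) b c d p q = - T x b c d p q.
Proof. exact: scalar_linearN (T_lin1 b c d p q) x. Qed.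
Lemma T_N2 a x c d p q : T a (- x) c d p q = - T a x c d p q.
Proof. exact: scalar_linearN (T_lin2 a c d p q) x. Qed.
Lemma T_N3 a b x d p q : T a b (- x) d p q = - T a b x d p q.
Proof. exact: scalar_linearN (T_lin3 a b d p q) x. Qed.
Lemma T_N4 a b c x p q : T a b c (- x) p q = - T a b c x p q.
Proof. exact: scalar_linearN (T_lin4 a b c p q) x. Qed.
Lemma T_N6 a b c d p x : T a b c d p (- x) = - T a b c d p x.
Proof. exact: scalar_linearN (T_lin6 a b c d p) x. Qed.

Lemma T_skew12 a b c d p q : T a b c d p q = - T b a c d p q.
Proof. by case: (T_sym a b c d p q). Qed.
Lemma T_skew34 a b c d p q : T a b c d p q = - T a b d c p q.
Proof. by case: (T_sym a b c d p q) => _ []. Qed.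
Lemma T_swap_pairs a b c d p q : T a b c d p q = T c d a b p q.
Proof. by case: (T_sym a b c d p q) => _ [_ []]. Qed.
Lemma T_bianchi a b c d p q : T a b c d p q + T a c d b p q + T a d b c p q = 0.
Proof. by case: (T_sym a b c d p q) => _ [_ [_ []]]. Qed.
Lemma T_JJ12 a b c d p q : T a b c d p q = T (J a) (J b) c d p q.
Proof. by case: (T_sym a b c d p q) => _ [_ [_ [_ []]]]. Qed.
Lemma T_JJ34 a b c d p q : T a b c d p q = T a b (J c) (J d) p q.
Proof. by case: (T_sym a b c d p q) => _ [_ [_ [_ [_ []]]]]. Qed.
Lemma T_skew56 a b c d p q : T a b c d p q = - T a b c d q p.
Proof. by case: (T_sym a b c d p q) => _ [_ [_ [_ [_ [_ []]]]]]. Qed.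
Lemma T_JJ56 a b c d p q : T a b c d p q = T a b c d (J p) (J q).
Proof. by case: (T_sym a b c d p q) => _ [_ [_ [_ [_ [_ []]]]]]. Qed.

Lemma T_J1 a b c d p q : T (J a) b c d p q = - T a (J b) c d p q.
Proof. by rewrite (T_JJ12 a (J b)) (JK b) T_N2 opprK. Qed.

Lemma T_J3 a b c d p q : T a b (J c) d p q = - T a b c (J d) p q.
Proof. by rewrite (T_JJ34 a b c (J d)) (JK d) T_N4 opprK. Qed.

Hypothesis T_holo0 : forall u v : V, T u (J u) (J u) u v (J v) = 0.

Lemma T_holo0_all u p q : T u (J u) (J u) u p q = 0.
Proof.
have polar v w : T u (J u) (J u) u v (J w) = 0.
  (* by (d), the cross terms T(.., w, Jv) and T(.., v, Jw) coincide *)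
  have := T_holo0 u (v + w).
  rewrite raddfD T_D5 !T_D6 !T_holo0 (T_JJ56 _ _ _ _ w) (JK v) T_N6 -T_skew56.
  lra.
by have := polar p (J q); rewrite (JK q) T_N6; lra.
Qed.

Lemma T_holo0_polar x y p q :
  T x (J x) (J y) y p q + 2 * T x (J y) (J x) y p q = 0.
Proof.
(* expand the vanishing at x + y and x - y; (a) and (c) identify the terms *)
have hp := T_holo0_all (x + y) p q; have hm := T_holo0_all (x - y) p q.
have hx := T_holo0_all x p q; have hy := T_holo0_all y p q.
have JD : J (x + y) = J x + J y by exact: raddfD.
have JB : J (x - y) = J x - J y by exact: raddfB.
rewrite JD !(T_D1, T_D2, T_D3, T_D4) in hp.
rewrite JB !(T_D1, T_D2, T_D3, T_D4) !(T_N1, T_N2, T_N3, T_N4) in hm.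
have i1 := T_swap_pairs y (J y) (J x) x p q.
have i2 := T_skew12 (J x) x y (J y) p q.
have i3 := T_skew34 x (J x) y (J y) p q.
have i4 := T_swap_pairs y (J x) (J y) x p q.
have i5 := T_skew12 (J y) x y (J x) p q.
have i6 := T_skew34 x (J y) y (J x) p q.
have i7 := T_skew12 y (J x) (J x) y p q.
have i8 := T_J1 x y (J x) y p q.
have i9 := T_J3 x (J y) y x p q.
lra.
Qed.

Lemma T_sect0 x y p q : T x y x y p q = 0.
Proof.
have e1 := T_holo0_polar x y p q.
have e2 := T_holo0_polar x (J y) p q; rewrite (JK y) T_N3 T_N2 in e2.
have e3 := T_bianchi x (J x) (J y) y p q.
have i1 := T_skew34 x (J x) y (J y) p q.
have i2 := T_skew34 x (J y) y (J x) p q.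
have i3 := T_JJ34 x y x y p q.
lra.
Qed.

Lemma T_sect0_polar x y z p q : T x y x z p q = 0.
Proof.
have := T_sect0 x (y + z) p q.
by rewrite T_D2 !T_D4 !T_sect0 (T_swap_pairs x z); lra.
Qed.

Lemma T_skew13 a b c d p q : T a b c d p q = - T c b a d p q.
Proof.
have := T_sect0_polar (a + c) b d p q.
by rewrite T_D1 !T_D3 !T_sect0_polar; lra.
Qed.

Lemma T_eq0 a b c d p q : T a b c d p q = 0.
Proof.
have e := T_bianchi a b c d p q.
have i1 := T_skew13 a c d b p q; have i2 := T_skew12 d c a b p q.
have i3 := T_swap_pairs c d a b p q.
have i4 := T_skew13 a d b c p q; have i5 := T_skew12 b d a c p q.
have i6 := T_swap_pairs d b a c p q.
lra.
Qed.

End KahlerTensor6.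

Section TensorDifference.

Variables (R : realType) (V : vectType R) (T1 T2 : tensor6 V).

Definition tensor6_sub : tensor6 V :=
  fun x1 x2 x3 x4 x5 x6 => T1 x1 x2 x3 x4 x5 x6 - T2 x1 x2 x3 x4 x5 x6.

Lemma multilinear6_sub : multilinear6 T1 -> multilinear6 T2 -> multilinear6 tensor6_sub.
Proof.
move=> hT1 hT2 a x y x1 x2 x3 x4 x5 x6; rewrite /tensor6_sub.
case: (hT1 a x y x1 x2 x3 x4 x5 x6) => [-> [-> [-> [-> [-> ->]]]]].
case: (hT2 a x y x1 x2 x3 x4 x5 x6) => [-> [-> [-> [-> [-> ->]]]]].
by repeat split; lra.
Qed.

Lemma sym_conditions_sub (J : V -> V) :
  sym_conditions J T1 -> sym_conditions J T2 -> sym_conditions J tensor6_sub.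
Proof.
move=> hS1 hS2 x1 x2 x3 x4 x5 x6; rewrite /tensor6_sub.
case: (hS1 x1 x2 x3 x4 x5 x6) => [a1 [a2 [a3 [a4 [a5 [a6 [a7 a8]]]]]]].
case: (hS2 x1 x2 x3 x4 x5 x6) => [b1 [b2 [b3 [b4 [b5 [b6 [b7 b8]]]]]]].
by repeat split; lra.
Qed.

End TensorDifference.

Theorem mainTheorem2 (R : realType) (V : vectType R) (n : nat)
  (hdim : \dim (fullv : {vspace V}) = (2 * n)%N)
  (J : {linear V -> V}) (hJ : forall x : V, J (J x) = - x)
  (T1 T2 : tensor6 V)
  (hT1 : multilinear6 T1) (hT2 : multilinear6 T2)
  (hS1 : sym_conditions J T1) (hS2 : sym_conditions J T2)
  (heq : forall u v : V, T1 u (J u) (J u) u v (J v) = T2 u (J u) (J u) u v (J v)) :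
  forall x1 x2 x3 x4 x5 x6 : V, T1 x1 x2 x3 x4 x5 x6 = T2 x1 x2 x3 x4 x5 x6.
Proof.
move=> x1 x2 x3 x4 x5 x6; apply/eqP; rewrite -subr_eq0; apply/eqP.
apply: (T_eq0 hJ (multilinear6_sub hT1 hT2) (sym_conditions_sub hS1 hS2)).
by move=> u v; rewrite /tensor6_sub heq subrr.
Qed.
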